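(* Let $K$ be an $\mathcal R$-dioid, $m\ge 2$, and let $\phi\in K\otimes_{\mathcal R}C_m'$ be given as $\phi=S(U+X+V+W\pi)^*F$, where $\pi=q_0p_0$ and, for some $n\ge 0$, $S\in\{0,1\}^{1\times n}$, $F\in\{0,1\}^{n\times 1}$, $X\in K^{n\times n}$, $W\in\{0,1\}^{n\times n}$, $U\in\{0,p_1,\ldots,p_{m-1}\}^{n\times n}$, $V\in\{0,q_1,\ldots,q_{m-1}\}^{n\times n}$. Then the inequation $y\ge (UyV+X)^*$ has a least solution $N$ in $\mathrm{Mat}_{n\times n}(K\otimes_{\mathcal R}C_m')$, and \[ p_0\,\phi\, q_0 = SN(WN)^*F \in Z_{C_m'}K. \]
   Context: An $\mathcal R$-dioid is a dioid in which every regular subset $A$ of its multiplicative monoid has a least upper bound $\sum A$ with $\sum(AB)=(\sum A)(\sum B)$; equivalently, a $*$-continuous Kleene algebra (Kleene algebra with $ac^*b=\sup_n ac^nb$). An $\mathcal R$-morphism is a dioid morphism preserving suprema of regular sets. An $\mathcal R$-congruence on an $\mathcal R$-dioid is a semiring congruence $\rho$ such that if regular sets $U,U'$ have the same downward closure modulo $\rho$, then $(\sum U)/\rho=(\sum U')/\rho$. For $m\ge 1$, $\Delta_m=\{p_0,\dots,p_{m-1}\}\cup\{q_0,\dots,q_{m-1}\}$ and the polycyclic $\mathcal R$-dioid is $C_m'=\mathcal R\Delta_m^*/\rho$, where $\mathcal R\Delta_m^*$ is the algebra of regular languages over $\Delta_m$ and $\rho$ is the least $\mathcal R$-congruence containing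 $p_iq_j=\delta_{i,j}$ for $i,j<m$ (Kronecker delta). $K\otimes_{\mathcal R}C_m'$ is the tensor product in the category of $\mathcal R$-dioids (universal $\mathcal R$-dioid receiving $\mathcal R$-morphisms from $K$ and $C_m'$ whose images commute elementwise); elements of $K$ and $C_m'$ are identified with their images. $Z_{C_m'}K$ denotes the set of elements of $K\otimes_{\mathcal R}C_m'$ commuting with every element of $C_m'$. Matrices over a Kleene algebra carry the standard matrix Kleene algebra structure; an element multiplied with a matrix is identified with the corresponding diagonal matrix. *)

From HB Require Import structures.
From mathcomp Require Import all_boot all_algebra.
From Stdlib Require Import ClassicalEpsilon.
Set Implicit Arguments. Unset Strict Implicit. Unset Printing Implicit Defensive.
Import GRing.Theory.
Local Open Scope ring_scope.

Section RegularSets.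
Variables (M : Type) (mul : M -> M -> M) (one : M).

Definition set_mul (A B : M -> Prop) : M -> Prop :=
  fun x => exists a b, A a /\ B b /\ x = mul a b.

Definition set_star (A : M -> Prop) : M -> Prop :=
  fun x => exists s : seq M, List.Forall A s /\ x = foldr mul one s.

Inductive regular_set : (M -> Prop) -> Prop :=
| reg_finite : forall s : seq M, regular_set (fun x => List.In x s)
| reg_union : forall A B, regular_set A -> regular_set B ->
    regular_set (fun x => A x \/ B x)
| reg_mul : forall A B, regular_set A -> regular_set B ->
    regular_set (set_mul A B)
| reg_star : forall A, regular_set A -> regular_set (set_star A)
| reg_ext : forall A B, regular_set A -> (forall x, A x <-> B x) ->
    regular_set B.
End RegularSets.

Definition dle {R : pzSemiRingType} (x y : R) : Prop := x + y = y.

Definition is_lub {R : pzSemiRingType} (A : R -> Prop) (s : R) : Prop :=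
  (forall a, A a -> dle a s) /\
  (forall t, (forall a, A a -> dle a t) -> dle s t).

HB.mixin Record PzSemiRing_isRDioid R of GRing.PzSemiRing R := {
  addrr_idem : forall x : R, x + x = x;
  rsup_exists : forall A : R -> Prop,
    regular_set (@GRing.mul R) 1 A -> exists s : R, is_lub A s;
  rsup_mul : forall (A B : R -> Prop) (s t : R),
    regular_set (@GRing.mul R) 1 A -> regular_set (@GRing.mul R) 1 B ->
    is_lub A s -> is_lub B t -> is_lub (set_mul (@GRing.mul R) A B) (s * t)
}.

#[short(type="rDioidType")]
HB.structure Definition RDioid :=
  { R of PzSemiRing_isRDioid R & GRing.PzSemiRing R }.

Definition image {A B : Type} (f : A -> B) (P : A -> Prop) : B -> Prop :=
  fun y => exists2 x, P x & y = f x.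

Definition Rmorphism (K D : rDioidType) (f : K -> D) : Prop :=
  [/\ f 0 = 0, f 1 = 1,
      (forall x y, f (x + y) = f x + f y),
      (forall x y, f (x * y) = f x * f y) &
      forall (A : K -> Prop) (s : K), regular_set (@GRing.mul K) 1 A ->
        is_lub A s -> is_lub (image f A) (f s)].

Section Languages.
Variable Sig : Type.

Definition lang := seq Sig -> Prop.
Definition regular_lang (a : lang) : Prop := regular_set (@cat Sig) [::] a.
Definition rlang := {a : lang | regular_lang a}.

Lemma regular_lang_empty : regular_lang (fun _ => False).
Proof. apply: reg_ext (reg_finite _ _ [::]) _ => x; split => //. Qed.

Lemma regular_lang_eps : regular_lang (fun w => w = [::]).
Proof.
apply: reg_ext (reg_finite _ _ [:: [::]]) _ => x /=.
by split; [case=> // | move=> ->; left].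
Qed.

Lemma regular_lang_word (u : seq Sig) : regular_lang (fun w => w = u).
Proof.
apply: reg_ext (reg_finite _ _ [:: u]) _ => x /=.
by split; [case=> // | move=> ->; left].
Qed.

Lemma regular_lang_union (a b : rlang) :
  regular_lang (fun w => sval a w \/ sval b w).
Proof. exact: reg_union (svalP a) (svalP b). Qed.

Lemma regular_lang_cat (a b : rlang) :
  regular_lang (set_mul (@cat Sig) (sval a) (sval b)).
Proof. exact: reg_mul (svalP a) (svalP b). Qed.

Definition rempty : rlang := exist _ _ regular_lang_empty.
Definition reps : rlang := exist _ _ regular_lang_eps.
Definition rword (u : seq Sig) : rlang := exist _ _ (regular_lang_word u).
Definition runion (a b : rlang) : rlang := exist _ _ (regular_lang_union a b).
Definition rcat (a b : rlang) : rlang := exist _ _ (regular_lang_cat a b).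

Definition is_union (U : rlang -> Prop) (s : rlang) : Prop :=
  forall w, sval s w <-> exists2 a, U a & sval a w.

Definition regular_family (U : rlang -> Prop) : Prop :=
  regular_set rcat reps U.

(* R-congruence on R Sig^*: a semiring congruence r such that regular sets
   with the same downward closure modulo r have r-equivalent sums.
   ([x] <= [u] modulo r means  r (x + u) u.) *)
Definition is_Rcongruence (r : rlang -> rlang -> Prop) : Prop :=
  [/\ (forall a, r a a),
      (forall a b, r a b -> r b a),
      (forall a b c, r a b -> r b c -> r a c),
      (forall a a' b b', r a a' -> r b b' ->
          r (runion a b) (runion a' b') /\ r (rcat a b) (rcat a' b')) &
      (forall (U U' : rlang -> Prop) (s s' : rlang),
          regular_family U -> regular_family U' ->
          is_union U s -> is_union U' s' ->
          (forall x, (exists2 u, U u & r (runion x u) u) <->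
                     (exists2 u, U' u & r (runion x u) u)) ->
          r s s')].
End Languages.

(* Letters: inl i = p_i, inr i = q_i  (i < m).                          *)
Definition Delta (m : nat) : Type := ('I_m + 'I_m)%type.

Definition rhoC (m : nat) (a b : rlang (Delta m)) : Prop :=
  forall r : rlang (Delta m) -> rlang (Delta m) -> Prop,
    is_Rcongruence r ->
    (forall i j : 'I_m,
        r (rword [:: inl i; inr j]) (if i == j then reps _ else rempty _)) ->
    r a b.

(* An R-morphism C_m' -> D, given through its composite
   g : R Delta_m^* -> D with the quotient map (so g is constant on rho-classes). *)
Definition CRmorphism (m : nat) (D : rDioidType) (g : rlang (Delta m) -> D) : Prop :=
  [/\ (forall a b, rhoC a b -> g a = g b),
      g (rempty _) = 0 /\ g (reps _) = 1,
      (forall a b, g (runion a b) = g a + g b),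
      (forall a b, g (rcat a b) = g a * g b) &
      forall (U : rlang (Delta m) -> Prop) (s : rlang (Delta m)),
        regular_family U -> is_union U s -> is_lub (image g U) (g s)].

Definition is_tensor (K : rDioidType) (m : nat) (T : rDioidType)
    (iK : K -> T) (jC : rlang (Delta m) -> T) : Prop :=
  [/\ Rmorphism iK, CRmorphism jC,
      (forall x a, iK x * jC a = jC a * iK x) &
      forall (D : rDioidType) (f : K -> D) (g : rlang (Delta m) -> D),
        Rmorphism f -> CRmorphism g -> (forall x a, f x * g a = g a * f x) ->
        exists h : T -> D,
          [/\ Rmorphism h, (forall x, h (iK x) = f x),
              (forall a, h (jC a) = g a) &
              forall h' : T -> D, Rmorphism h' -> (forall x, h' (iK x) = f x) ->
                (forall a, h' (jC a) = g a) -> forall y, h' y = h y]].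

Definition pgen (m : nat) (T : rDioidType) (jC : rlang (Delta m) -> T) (i : 'I_m) : T :=
  jC (rword [:: inl i]).
Definition qgen (m : nat) (T : rDioidType) (jC : rlang (Delta m) -> T) (i : 'I_m) : T :=
  jC (rword [:: inr i]).

Definition centralizerC (m : nat) (T : rDioidType) (jC : rlang (Delta m) -> T) (x : T) : Prop :=
  forall a, x * jC a = jC a * x.

Definition lubc (R : rDioidType) (A : R -> Prop) : R :=
  epsilon (inhabits 0) (fun s => is_lub A s).

Definition mxpow (R : rDioidType) (n : nat) (A : 'M[R]_n) (k : nat) : 'M[R]_n :=
  iter k (mulmx A) 1%:M.

Definition mxstar (R : rDioidType) (n : nat) (A : 'M[R]_n) : 'M[R]_n :=
  \matrix_(i, j) lubc (fun x => exists k, x = mxpow A k i j).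

Definition mxle (R : rDioidType) (n m : nat) (A B : 'M[R]_(n, m)) : Prop :=
  forall i j, dle (A i j) (B i j).

From mathcomp Require Import all_boot all_algebra.
From Stdlib Require Import ClassicalEpsilon ProofIrrelevance.
From Stdlib Require Import FunctionalExtensionality PropExtensionality.
Set Implicit Arguments. Unset Strict Implicit. Unset Printing Implicit Defensive.
Import GRing.Theory.
Local Open Scope ring_scope.

(* Put N := p_0 (U + X + V)^* q_0, with p_0 and q_0 acting as scalar
   matrices. Expanding the star into path weights w, the relations p_i q_j = δ_ij
   reduce each p_0 w q_0 to a finite sum of weights of well-nested paths, in which
   every letter p_k coming from U is matched by a later letter q_k coming from V and
   cancelled against it. Such weights lie in Z_{C_m'} K, and they are exactly what
   the solutions of y >= (U y V + X)^* must dominate: hence N has central entries,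
   solves the inequation, and lies below each of its solutions. Finally, S, F and W
   are 0/1 matrices, so the denesting and sliding rules of the matrix Kleene algebra
   turn p_0 S (U + X + V + W q_0 p_0)^* F q_0 into S N (W N)^* F. *)

Section IdempotentSemiring.
Variable R : pzSemiRingType.
Hypothesis addrr_idemR : forall x : R, x + x = x.
Implicit Types a x y z : R.

Lemma dle_refl x : dle x x.
Proof. exact: addrr_idemR. Qed.

Lemma dle_trans y x z : dle x y -> dle y z -> dle x z.
Proof. by rewrite /dle => xy yz; rewrite -yz addrA xy. Qed.

Lemma dle_anti x y : dle x y -> dle y x -> x = y.
Proof. by rewrite /dle => xy yx; rewrite -xy addrC yx. Qed.

Lemma dle0x x : dle 0 x.
Proof. by rewrite /dle add0r. Qed.

Lemma dle_addl x y : dle x (x + y).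
Proof. by rewrite /dle addrA addrr_idemR. Qed.

Lemma dle_addr x y : dle y (x + y).
Proof. by rewrite addrC; apply: dle_addl. Qed.

Lemma dle_join x y z : dle x z -> dle y z -> dle (x + y) z.
Proof. by rewrite /dle => xz yz; rewrite -addrA yz xz. Qed.

Lemma dle_mul2l a x y : dle x y -> dle (a * x) (a * y).
Proof. by rewrite /dle => xy; rewrite -mulrDr xy. Qed.

Lemma dle_mul2r a x y : dle x y -> dle (x * a) (y * a).
Proof. by rewrite /dle => xy; rewrite -mulrDl xy. Qed.

Lemma dle_mul x y x' y' : dle x y -> dle x' y' -> dle (x * x') (y * y').
Proof.
by move=> xy xy'; apply: (dle_trans (y := x * y')); [apply: dle_mul2l | apply: dle_mul2r].
Qed.

Lemma dle_sum (I : finType) (F : I -> R) z :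
  (forall i, dle (F i) z) -> dle (\sum_i F i) z.
Proof.
move=> Fz; apply: (big_ind (dle^~ z)) => //; [exact: dle0x | by move=> x y; apply: dle_join].
Qed.

Lemma dle_sum_term (I : finType) (F : I -> R) i : dle (F i) (\sum_j F j).
Proof. by rewrite (bigD1 i) //=; apply: dle_addl. Qed.

End IdempotentSemiring.

Section KleeneAlgebra.
Variables (R : pzSemiRingType) (star : R -> R).
Hypothesis addrr_idemR : forall x : R, x + x = x.
Hypothesis star_ge1 : forall x, dle 1 (star x).
Hypothesis star_unfoldl : forall x, dle (x * star x) (star x).
Hypothesis star_unfoldr : forall x, dle (star x * x) (star x).
Hypothesis star_indl : forall a b x, dle (b + a * x) x -> dle (star a * b) x.
Hypothesis star_indr : forall a b x, dle (b + x * a) x -> dle (b * star a) x.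
Implicit Types x y : R.

Lemma star_slide x y : star (x * y) * x = x * star (y * x).
Proof.
apply: dle_anti.
  apply: star_indl; apply: dle_join.
    by rewrite -{1}[x]mulr1; apply: dle_mul2l.
  by rewrite -!mulrA; apply: dle_mul2l; rewrite mulrA.
apply: star_indr; apply: dle_join.
  by rewrite -{1}[x]mul1r; apply: dle_mul2r.
by rewrite -mulrA [x * (y * x)]mulrA mulrA; apply: dle_mul2r.
Qed.

Lemma star_mono x y : dle x y -> dle (star x) (star y).
Proof.
move=> xy; rewrite -[star x]mulr1; apply: star_indl; apply: dle_join => //.
by apply: dle_trans (star_unfoldl y); apply: dle_mul2r.
Qed.

Lemma star_mul_star x : dle (star x * star x) (star x).
Proof. by apply: star_indl; apply: dle_join; [apply: dle_refl | apply: star_unfoldl]. Qed.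

Lemma star_denest x y : star (x + y) = star x * star (y * star x).
Proof.
apply: dle_anti.
  rewrite -[star (x + y)]mulr1; apply: star_indl; apply: dle_join.
    by rewrite -[1]mulr1; apply: dle_mul.
  rewrite mulrDl; apply: dle_join; first by rewrite mulrA; apply: dle_mul2r.
  rewrite mulrA; apply: (dle_trans (y := star (y * star x))); first exact: star_unfoldl.
  by rewrite -{1}[star (y * _)]mul1r; apply: dle_mul2r.
apply: star_indr; apply: dle_join; first by apply/star_mono/dle_addl.
rewrite !mulrA; apply: dle_trans (star_mul_star (x + y)).
apply: dle_mul; last by apply/star_mono/dle_addl.
by apply: dle_trans (star_unfoldr _); apply/dle_mul2l/dle_addr.
Qed.

End KleeneAlgebra.

Section RDioidSuprema.
Variable R : rDioidType.
Implicit Types (A : R -> Prop) (s x y z : R).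

Notation regular A := (regular_set (@GRing.mul R) 1 A).

Lemma is_lub_unique A s s' : is_lub A s -> is_lub A s' -> s = s'.
Proof. by move=> [As leAs] [As' leAs']; apply: dle_anti; [apply: leAs | apply: leAs']. Qed.

Lemma is_lub_ub A s x : is_lub A s -> A x -> dle x s.
Proof. by move=> [+ _]; apply. Qed.

Lemma is_lub_ext A A' s : (forall x, A x <-> A' x) -> is_lub A s -> is_lub A' s.
Proof.
move=> AA' [As leAs]; split; first by move=> x /AA'; apply: As.
by move=> t A't; apply: leAs => x /AA'; apply: A't.
Qed.

Lemma regular_set1 x : regular (fun y => y = x).
Proof.
apply: reg_ext (reg_finite _ _ [:: x]) _ => y /=.
by split; [case=> // <- | move=> ->; left].
Qed.

Lemma is_lub1 x : is_lub (fun y => y = x) x.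
Proof. by split=> [y -> | t]; [apply: (dle_refl addrr_idem) | apply]. Qed.

Lemma regular_mul1l A x : regular A -> regular (set_mul *%R (fun y => y = x) A).
Proof. by move=> regA; apply: reg_mul regA; apply: regular_set1. Qed.

Lemma is_lub_mul1l A s x : regular A -> is_lub A s ->
  is_lub (set_mul *%R (fun y => y = x) A) (x * s).
Proof. by move=> regA lubA; apply: rsup_mul => //; [apply: regular_set1 | apply: is_lub1]. Qed.

Lemma is_lub_mul1r A s x : regular A -> is_lub A s ->
  is_lub (set_mul *%R A (fun y => y = x)) (s * x).
Proof. by move=> regA lubA; apply: rsup_mul => //; [apply: regular_set1 | apply: is_lub1]. Qed.

Lemma is_lub_sandwich A s x y : regular A -> is_lub A s ->
  is_lub (set_mul *%R (set_mul *%R (fun z => z = x) A) (fun z => z = y)) (x * s * y).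
Proof. by move=> regA lubA; apply: is_lub_mul1r; [apply: regular_mul1l | apply: is_lub_mul1l]. Qed.

Lemma dle_sandwich_lub A s x y z : regular A -> is_lub A s ->
  (forall a, A a -> dle (x * a * y) z) -> dle (x * s * y) z.
Proof.
move=> regA lubA xAyz; apply: (is_lub_sandwich x y regA lubA).2.
by move=> _ [_ [_ [[_ [a [-> [Aa ->]]]] [-> ->]]]]; apply: xAyz.
Qed.

End RDioidSuprema.

Section MatrixPaths.
Variables (R : rDioidType) (n : nat) (M : 'M[R]_n).
Notation regular A := (regular_set (@GRing.mul R) 1 A).
Implicit Types (i j k : 'I_n) (s : seq 'I_n).

Fixpoint path_weight i s j : R :=
  if s is k :: s' then M i k * path_weight k s' j else M i j.

Lemma path_weight_cat i s1 k s2 j :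
  path_weight i (s1 ++ k :: s2) j = path_weight i s1 k * path_weight k s2 j.
Proof. by elim: s1 i => [|h s1 IHs] i //=; rewrite IHs mulrA. Qed.

Definition below (r : nat) s := all (fun k : 'I_n => (k < r)%N) s.

Lemma below_succ r s : below r s -> below r.+1 s.
Proof. by apply: sub_all => k /ltnW. Qed.

Lemma below_cat r k s1 s2 : nat_of_ord k = r -> below r s1 -> below r.+1 s2 ->
  below r.+1 (s1 ++ k :: s2).
Proof. by move=> kr /below_succ b1 b2; rewrite /below all_cat /= kr ltnSn; apply/andP. Qed.

Definition paths_below (r : nat) i j (x : R) : Prop :=
  exists2 s, below r s & x = path_weight i s j.

Lemma below_split r k s : nat_of_ord k = r -> below r.+1 s ->
  below r s \/ exists s1 s2, [/\ s = s1 ++ k :: s2, below r s1 & below r.+1 s2].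
Proof.
move=> kr; elim: s => [|h s IHs] /=; first by left.
case/andP; rewrite ltnS leq_eqVlt => /orP[/eqP hr | hr] bs.
  have -> : h = k by apply: val_inj; rewrite /= hr kr.
  by right; exists [::], s.
case: (IHs bs) => [bs' | [s1 [s2 [-> b1 b2]]]]; first by left; rewrite /below /= hr.
by right; exists (h :: s1), s2; rewrite /below /= hr.
Qed.

Lemma paths_below_succ_loops r k j s : nat_of_ord k = r -> below r.+1 s ->
  set_mul *%R (set_star *%R 1 (paths_below r k k)) (paths_below r k j) (path_weight k s j).
Proof.
move=> kr; elim: {s}(size s) {-2}s (leqnn (size s)) => [|l IHl] s.
  case: s => // _ _; exists 1, (M k j).
  by split; [exists [::] | split; [exists [::] | rewrite mul1r]].
move=> sl /(below_split kr) [bs | [s1 [s2 [es b1 b2]]]].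
  by exists 1, (path_weight k s j); split; [exists [::] | split; [exists s | rewrite mul1r]].
have s2l : (size s2 <= l)%N.
  by move: sl; rewrite es size_cat /= addnS ltnS; apply/leq_trans/leq_addl.
have [_ [y [[ls [lsP ->]] [y_j e2]]]] := IHl s2 s2l b2.
exists (path_weight k s1 k * foldr *%R 1 ls), y; split; last split => //.
  by exists (path_weight k s1 k :: ls); split => //; constructor => //; exists s1.
by rewrite es path_weight_cat e2 mulrA.
Qed.

Lemma loops_paths_below r k j ls s : nat_of_ord k = r ->
  List.Forall (paths_below r k k) ls -> below r s ->
  paths_below r.+1 k j (foldr *%R 1 ls * path_weight k s j).
Proof.
move=> kr lsP bs; elim: lsP => [|_ ls' [s1 b1 ->] _ [s' b' e']] /=.
  by exists s; [apply: below_succ | rewrite mul1r].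
by exists (s1 ++ k :: s'); [apply: below_cat | rewrite path_weight_cat -mulrA e'].
Qed.

(* Kleene's construction: paths_below r.+1 i j is the union of paths_below r i j
   and paths_below r i r * (paths_below r r r)^* * paths_below r r j. *)
Lemma regular_paths_below r i j : (r <= n)%N -> regular (paths_below r i j).
Proof.
elim: r i j => [|r IHr] i j rn.
  apply: reg_ext (reg_finite _ _ [:: M i j]) _ => x /=.
  by split=> [[<- // | []] | [[|//] _ ->]]; [exists [::] | left].
pose k := Ordinal rn; have kr : nat_of_ord k = r by [].
have IH i' j' := IHr i' j' (ltnW rn).
apply: reg_ext (reg_union (IH i j) (reg_mul (reg_mul (IH i k) (reg_star (IH k k))) (IH k j))) _.
move=> x; split=> [[[s bs ->] | ] | [s bs ->]].
- by exists s; first exact: below_succ.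
- move=> [_ [_ [[y [_ [[s1 b1 ->] [[ls [lsP ->]] ->]]]] [[s3 b3 ->] ->]]]].
  rewrite -mulrA; have [s' b' ->] := loops_paths_below j kr lsP b3.
  by exists (s1 ++ k :: s'); [apply: below_cat | rewrite path_weight_cat].
- case: (below_split kr bs) => [bs' | [s1 [s2 [-> b1 b2]]]]; first by left; exists s.
  right; have [y [z [y_k [z_j yz]]]] := paths_below_succ_loops j kr b2.
  exists (path_weight i s1 k * y), z; split; last split => //.
    by exists (path_weight i s1 k), y; split => //; exists s1.
  by rewrite path_weight_cat yz mulrA.
Qed.

Definition paths i j (x : R) : Prop :=
  (i = j /\ x = 1) \/ exists s, x = path_weight i s j.

Lemma regular_paths i j : regular (paths i j).
Proof.
apply: reg_ext (reg_union (reg_finite _ _ (if i == j then [:: 1] else [::]))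
                          (regular_paths_below i j (leqnn n))) _ => x.
split=> [[| [s _ ->]] | [[-> ->] | [s ->]]].
- by case: eqP => // -> [] // <-; left.
- by right; exists s.
- by left; rewrite eqxx; left.
- by right; exists s => //; apply/allP => k _; apply: ltn_ord.
Qed.

Lemma paths_edge i k j x : paths k j x -> paths i j (M i k * x).
Proof. by case=> [[-> ->] | [s ->]]; right; [exists [::]; rewrite mulr1 | exists (k :: s)]. Qed.

Lemma paths_cat i k j x y : paths i k x -> paths k j y -> paths i j (x * y).
Proof.
case=> [[-> ->] | [s ->]]; first by rewrite mul1r.
case=> [[<- ->] | [s' ->]]; right; first by exists s; rewrite mulr1.
by exists (s ++ k :: s'); rewrite path_weight_cat.
Qed.

Lemma path_weight_le_mxpow i s j : dle (path_weight i s j) (mxpow M (size s).+1 i j).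
Proof.
elim: s i => [|h s IHs] i; first by rewrite /mxpow /= mulmx1; apply: (dle_refl addrr_idem).
rewrite /= [mxpow _ _]/= mxE; apply: dle_trans (dle_sum_term addrr_idem _ h).
exact: dle_mul2l.
Qed.

Lemma mxpow_le_paths (l : nat) i j a t :
  (forall s, size s = l -> dle (a * path_weight i s j) t) -> dle (a * mxpow M l.+1 i j) t.
Proof.
elim: l i a => [|l IHl] i a ast; first by rewrite /mxpow /= mulmx1; apply: (ast [::]).
rewrite [mxpow _ _]/= mxE mulr_sumr; apply: dle_sum => h; rewrite mulrA.
by apply: IHl => s sl; rewrite -mulrA; apply: (ast (h :: s)); rewrite /= sl.
Qed.

Lemma is_lub_paths_mxpow i j x :
  is_lub (paths i j) x -> is_lub (fun y => exists l, y = mxpow M l i j) x.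
Proof.
move=> [ub_x lub_x]; split=> [_ [[|l] ->] | t ub_t].
- by rewrite /mxpow /= mxE; case: eqP => [ij | _]; [apply: ub_x; left | apply: dle0x].
- rewrite -[mxpow _ _ _ _]mul1r; apply: mxpow_le_paths => s _.
  by rewrite mul1r; apply: ub_x; right; exists s.
apply: lub_x => _ [[ij ->] | [s ->]].
  by have := ub_t (mxpow M 0 i j) (ex_intro _ 0%N erefl); rewrite /mxpow /= mxE ij eqxx.
by apply: dle_trans (path_weight_le_mxpow _ _ _) _; apply: ub_t; eexists.
Qed.

Lemma mxstar_is_lub i j : is_lub (paths i j) (mxstar M i j).
Proof.
have [x lub_x] := rsup_exists _ (regular_paths i j).
have lub_pow := is_lub_paths_mxpow lub_x.
suff -> : mxstar M i j = x by [].
by rewrite mxE; apply: is_lub_unique (epsilon_spec _ _ (ex_intro _ x lub_pow)) lub_pow.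
Qed.

Lemma paths_le_mxpow i j x : paths i j x -> exists l, dle x (mxpow M l i j).
Proof.
case=> [[-> ->] | [s ->]]; last by exists (size s).+1; apply: path_weight_le_mxpow.
by exists 0%N; rewrite /mxpow /= mxE eqxx; apply: (dle_refl addrr_idem).
Qed.

Lemma mxpow_le_mxstar (l : nat) i j : dle (mxpow M l i j) (mxstar M i j).
Proof. by apply: (is_lub_paths_mxpow (mxstar_is_lub i j)).1; exists l. Qed.

End MatrixPaths.

Section MatrixKleeneAlgebra.
Variables (R : rDioidType) (n : nat).
Implicit Types A B C M : 'M[R]_n.

Lemma mx_addrr_idem A : A + A = A.
Proof. by apply/matrixP => i j; rewrite mxE addrr_idem. Qed.

Lemma dle_mxP A B : dle A B <-> mxle A B.
Proof.
split=> [AB i j | AB]; first by rewrite /dle -{2}AB mxE.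
by apply/matrixP => i j; rewrite mxE; apply: AB.
Qed.

Lemma dle_mulmx_term A B i k j : dle (A i k * B k j) ((A * B) i j).
Proof. by rewrite [(A * B) i j]mxE; apply: (dle_sum_term addrr_idem (fun k => A i k * B k j)). Qed.

Lemma dle_mulmx3_term A B C i k l j : dle (A i k * B k l * C l j) ((A * B * C) i j).
Proof. by apply: dle_trans (dle_mulmx_term _ _ _ l _); apply/dle_mul2r/dle_mulmx_term. Qed.

Lemma mxpowSr M l : mxpow M l.+1 = mxpow M l * M.
Proof.
have mxpowS l' : mxpow M l'.+1 = M * mxpow M l' by [].
have mxpow0 : mxpow M 0 = 1 by [].
elim: l => [|l IHl]; first by rewrite mxpowS mxpow0 mulr1 mul1r.
by rewrite [LHS]mxpowS [in LHS]IHl mulrA.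
Qed.

Lemma mxpow_le_mxstar_mx M l : dle (mxpow M l) (mxstar M).
Proof. by apply/dle_mxP => i j; apply: mxpow_le_mxstar. Qed.

(* *-continuity of the matrix star, inherited entrywise from the R-dioid. *)
Lemma dle_mxstar_cont M A C D :
  (forall l, dle (A * mxpow M l * C) D) -> dle (A * mxstar M * C) D.
Proof.
move=> AMC; apply/dle_mxP => i j; rewrite [(_ * C) i j]mxE; apply: dle_sum => l.
rewrite [(A * _) i l]mxE mulr_suml; apply: dle_sum => k.
apply: (dle_sandwich_lub (regular_paths M k l) (mxstar_is_lub M k l)).
move=> w /paths_le_mxpow[l' wl'].
apply: dle_trans ((dle_mxP _ _).1 (AMC l') i j).
by apply: dle_trans (dle_mulmx3_term _ _ _ _ k l _); apply/dle_mul2r/dle_mul2l.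
Qed.

Lemma mxstar_ge1 M : dle 1 (mxstar M).
Proof. exact: (mxpow_le_mxstar_mx M 0). Qed.

Lemma mxstar_unfoldl M : dle (M * mxstar M) (mxstar M).
Proof.
rewrite -[M * _]mulr1; apply: dle_mxstar_cont => l.
by rewrite mulr1; apply: (mxpow_le_mxstar_mx M l.+1).
Qed.

Lemma mxstar_unfoldr M : dle (mxstar M * M) (mxstar M).
Proof.
rewrite -[_ * M]mul1r mulrA; apply: dle_mxstar_cont => l.
by rewrite mul1r -mxpowSr; apply: mxpow_le_mxstar_mx.
Qed.

Lemma mxstar_indl A B C : dle (B + A * C) C -> dle (mxstar A * B) C.
Proof.
move=> ABC; rewrite -[_ * B]mul1r mulrA; apply: dle_mxstar_cont => l; rewrite mul1r.
elim: l => [|l IHl].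
  by rewrite mul1r; apply: dle_trans ABC; apply: dle_addl mx_addrr_idem _ _.
rewrite [mxpow _ _]/= -mulrA; apply: dle_trans ABC; apply: dle_trans (dle_addr mx_addrr_idem _ _).
exact: dle_mul2l.
Qed.

Lemma mxstar_indr A B C : dle (B + C * A) C -> dle (B * mxstar A) C.
Proof.
move=> BCA; rewrite -[B * _]mulr1; apply: dle_mxstar_cont => l; rewrite mulr1.
elim: l => [|l IHl].
  by rewrite mulr1; apply: dle_trans BCA; apply: dle_addl mx_addrr_idem _ _.
rewrite mxpowSr mulrA; apply: dle_trans BCA; apply: dle_trans (dle_addr mx_addrr_idem _ _).
exact: dle_mul2r.
Qed.

Lemma mxstar_slide A B : mxstar (A * B) * A = A * mxstar (B * A).
Proof.
exact: star_slide mxstar_ge1 mxstar_unfoldl mxstar_unfoldr mxstar_indl mxstar_indr A B.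
Qed.

Lemma mxstar_denest A B : mxstar (A + B) = mxstar A * mxstar (B * mxstar A).
Proof.
exact: star_denest mx_addrr_idem mxstar_ge1 mxstar_unfoldl mxstar_unfoldr
  mxstar_indl mxstar_indr A B.
Qed.

End MatrixKleeneAlgebra.

Section FiniteSums.
Variable R : pzSemiRingType.

Inductive finsum (P : R -> Prop) : R -> Prop :=
| finsum0 : finsum P 0
| finsum1 x : P x -> finsum P x
| finsumD x y : finsum P x -> finsum P y -> finsum P (x + y).

Lemma finsum_sub (P P' : R -> Prop) x :
  (forall t, P t -> P' t) -> finsum P x -> finsum P' x.
Proof.
by move=> PP'; elim=> [|t /PP'|x1 x2 _ + _]; [apply: finsum0 | apply: finsum1 | apply: finsumD].
Qed.

Lemma finsum_mull (P P' : R -> Prop) a x :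
  (forall t, P t -> P' (a * t)) -> finsum P x -> finsum P' (a * x).
Proof.
move=> PP'; elim=> [|t /PP'|x1 x2 _ + _]; first by rewrite mulr0; apply: finsum0.
  exact: finsum1.
by rewrite mulrDr; apply: finsumD.
Qed.

Lemma dle_finsum (P : R -> Prop) x a b z :
  finsum P x -> (forall t, P t -> dle (a * t * b) z) -> dle (a * x * b) z.
Proof.
move=> + atbz; elim=> [|t /atbz //|x1 x2 _ le1 _ le2]; first by rewrite mulr0 mul0r; apply: dle0x.
by rewrite mulrDr mulrDl; apply: dle_join.
Qed.

Lemma finsum_closed (P Q : R -> Prop) x : Q 0 -> (forall y z, Q y -> Q z -> Q (y + z)) ->
  (forall t, P t -> Q t) -> finsum P x -> Q x.
Proof. by move=> Q0 QD PQ; elim=> [|t /PQ|x1 x2 _ + _] //; apply: QD. Qed.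

End FiniteSums.

Section MatrixEntries.
Variables (R : pzSemiRingType) (n : nat).
Implicit Types (A : 'M[R]_n) (a : R).

Lemma dle_mulmx4 A1 A2 A3 A4 i j z :
  (forall c d e, dle (A1 i c * A2 c d * A3 d e * A4 e j) z) ->
  dle ((A1 * A2 * A3 * A4) i j) z.
Proof.
move=> Az; rewrite [(_ * A4) i j]mxE; apply: dle_sum => e.
rewrite [(_ * A3) i e]mxE mulr_suml; apply: dle_sum => d.
by rewrite [(_ * A2) i d]mxE !mulr_suml; apply: dle_sum => c.
Qed.

Lemma scalar_mulmxE a A i j : (a%:M *m A) i j = a * A i j.
Proof. by rewrite mul_scalar_mx mxE. Qed.

Lemma mulmx_scalarE A a i j : (A *m a%:M) i j = A i j * a.
Proof.
rewrite mxE (bigD1 j) //= mxE eqxx mulr1n big1 ?addr0 // => k /negbTE kj.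
by rewrite mxE kj mulr0n mulr0.
Qed.

Lemma mulmx_scalarC A a : (forall i j, A i j * a = a * A i j) -> A * a%:M = a%:M * A.
Proof. by move=> Aa; apply/matrixP => i j; rewrite mulmx_scalarE scalar_mulmxE. Qed.

Lemma mulmx_scalar_sandwich (k l : nat) (S : 'M[R]_(k, n)) (F : 'M[R]_(n, l)) A x y i j :
  (forall i j, S i j * x = x * S i j) -> (forall i j, F i j * y = y * F i j) ->
  x * (S *m A *m F) i j * y = (S *m (x%:M * A * y%:M) *m F) i j.
Proof.
move=> Sx Fy; rewrite !mxE mulr_sumr mulr_suml; apply: eq_bigr => e _.
rewrite !mxE !mulr_suml !mulr_sumr !mulr_suml; apply: eq_bigr => c _.
have -> : (x%:M * A * y%:M) c e = x * A c e * y by rewrite mulmx_scalarE scalar_mulmxE.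
by rewrite !mulrA Sx -!mulrA Fy.
Qed.

End MatrixEntries.

Lemma rcat_rword (Sig : Type) (u v : seq Sig) : rcat (rword u) (rword v) = rword (u ++ v).
Proof.
apply: eq_sig_hprop => [x | /=]; first exact: proof_irrelevance.
apply: functional_extensionality => w; apply: propositional_extensionality.
by split=> [[_ [_ [-> [-> ->]]]] | ->] //; exists u, v.
Qed.

Section Centralizer.
Variables (m : nat) (T : rDioidType) (jC : rlang (Delta m) -> T).
Notation central := (centralizerC jC).
Implicit Types x y : T.

Lemma centralizerC0 : central 0.
Proof. by move=> a; rewrite mul0r mulr0. Qed.

Lemma centralizerC1 : central 1.
Proof. by move=> a; rewrite mul1r mulr1. Qed.

Lemma centralizerCD x y : central x -> central y -> central (x + y).
Proof. by move=> cx cy a; rewrite mulrDl mulrDr cx cy. Qed.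

Lemma centralizerCM x y : central x -> central y -> central (x * y).
Proof. by move=> cx cy a; rewrite -mulrA cy mulrA cx mulrA. Qed.

Lemma centralizerC01 x : x = 0 \/ x = 1 -> central x.
Proof. by case=> ->; [apply: centralizerC0 | apply: centralizerC1]. Qed.

Lemma centralizerC_finsum (P : T -> Prop) x :
  (forall t, P t -> central t) -> finsum P x -> central x.
Proof. by apply: finsum_closed; [apply: centralizerC0 | apply: centralizerCD]. Qed.

(* Both x |-> x * jC a and x |-> jC a * x map s to the supremum of the image of A
   (axiom rsup_mul), and the two images coincide. *)
Lemma centralizerC_lub (A : T -> Prop) s : regular_set *%R 1 A -> is_lub A s ->
  (forall x, A x -> central x) -> central s.
Proof.
move=> regA lubA cA a; apply: is_lub_unique (is_lub_mul1r (jC a) regA lubA) _.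
apply: is_lub_ext (is_lub_mul1l (jC a) regA lubA) => x.
split=> [[_ [y [-> [Ay ->]]]] | [y [_ [Ay [-> ->]]]]].
  by exists y, (jC a); rewrite cA.
by exists (jC a), y; rewrite cA.
Qed.

Lemma centralizerC_mulmx (k l r : nat) (A : 'M[T]_(k, l)) (B : 'M[T]_(l, r)) :
  (forall i j, central (A i j)) -> (forall i j, central (B i j)) ->
  forall i j, central ((A *m B) i j).
Proof.
move=> cA cB i j; rewrite mxE.
apply: (big_ind central) => [|x y|h _]; first exact: centralizerC0.
  exact: centralizerCD.
exact: centralizerCM.
Qed.

Lemma centralizerC_mxstar (n : nat) (M : 'M[T]_n) :
  (forall i j, central (M i j)) -> forall i j, central (mxstar M i j).
Proof.
move=> cM i j; apply: centralizerC_lub (regular_paths M i j) (mxstar_is_lub M i j) _.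
move=> _ [[_ ->] | [s ->]]; first exact: centralizerC1.
by elim: s i => [|k s IHs] i /=; [apply: cM | apply: centralizerCM].
Qed.

End Centralizer.

Section TensorProduct.
Variables (K : rDioidType) (m : nat) (T : rDioidType).
Variables (iK : K -> T) (jC : rlang (Delta m) -> T).
Hypothesis tensorT : is_tensor iK jC.
Notation central := (centralizerC jC).
Notation p := (pgen jC).
Notation q := (qgen jC).

Lemma iK_central x : central (iK x).
Proof. by case: tensorT => _ _ iKjC _ a; apply: iKjC. Qed.

Lemma pgen_qgen i j : p i * q j = if i == j then 1 else 0.
Proof.
case: tensorT => _ [jC_rho [jC0 jC1] _ jCM _] _ _.
rewrite /pgen /qgen -jCM rcat_rword /=.
rewrite (jC_rho _ (if i == j then reps _ else rempty _)); first by case: eqP.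
by move=> r _; apply.
Qed.

Lemma pgen_central_qgen k t : central t -> p k * t * q k = t.
Proof. by move=> ct; rewrite -mulrA [t * _]ct mulrA pgen_qgen eqxx mul1r. Qed.

End TensorProduct.

Section LeastSolution.
Variables (K : rDioidType) (m : nat) (T : rDioidType).
Variables (iK : K -> T) (jC : rlang (Delta m) -> T).
Hypothesis tensorT : is_tensor iK jC.
Variables (i0 : 'I_m) (n : nat) (X : 'M[K]_n) (U V : 'M[T]_n).
Hypothesis U_gen : forall a b, U a b = 0 \/ exists2 k, k != i0 & U a b = pgen jC k.
Hypothesis V_gen : forall a b, V a b = 0 \/ exists2 k, k != i0 & V a b = qgen jC k.

Notation central := (centralizerC jC).
Notation p := (pgen jC).
Notation q := (qgen jC).
Notation B := (U + map_mx iK X + V).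
Implicit Types (a b c d e : 'I_n) (t w : T) (ks : seq 'I_m).

Lemma dle_U_B a b : dle (U a b) (B a b).
Proof.
by rewrite !mxE; apply: dle_trans (dle_addl addrr_idem _ _); apply: dle_addl addrr_idem _ _.
Qed.

Lemma dle_X_B a b : dle (iK (X a b)) (B a b).
Proof.
by rewrite !mxE; apply: dle_trans (dle_addl addrr_idem _ _); apply: dle_addr addrr_idem _ _.
Qed.

Lemma dle_V_B a b : dle (V a b) (B a b).
Proof. by rewrite !mxE; apply: dle_addr addrr_idem _ _. Qed.

(* [balanced a b t]: t is the weight of a path from a to b in B whose letters p_k
   (from U) and q_k (from V) are well nested, each matching pair p_k .. q_k having
   been cancelled. *)
Inductive balanced : 'I_n -> 'I_n -> T -> Prop :=
| balanced_nil a : balanced a a 1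
| balanced_X a c b t : balanced c b t -> balanced a b (iK (X a c) * t)
| balanced_pq a c d e b k t1 t2 : U a c = p k -> V d e = q k ->
    balanced c d t1 -> balanced e b t2 -> balanced a b (t1 * t2).

Lemma balanced_central a b t : balanced a b t -> central t.
Proof.
elim=> {a b t} [a | a c b t _ ct | a c d e b k t1 t2 _ _ _ ct1 _ ct2].
- exact: centralizerC1.
- by apply: centralizerCM ct; apply: iK_central.
- exact: centralizerCM.
Qed.

Lemma balanced_cat a c b t1 t2 :
  balanced a c t1 -> balanced c b t2 -> balanced a b (t1 * t2).
Proof.
elim=> {a c t1} [a | a c c' t _ IHt | a c d e c' k t1 t1' Uac Vde bal1 _ _ IHt] bal2.
- by rewrite mul1r.
- by rewrite -mulrA; apply/balanced_X/IHt.
- by rewrite -mulrA; apply: balanced_pq Uac Vde bal1 (IHt bal2).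
Qed.

Lemma balanced_le_path a b t : balanced a b t -> exists2 w, paths B a b w & dle t w.
Proof.
elim=> {a b t} [a | a c b t _ [w pw tw]
               | a c d e b k t1 t2 Uac Vde bal1 [w1 pw1 tw1] _ [w2 pw2 tw2]].
- by exists 1; [left | apply: (dle_refl addrr_idem)].
- by exists (B a c * w); [apply: paths_edge | apply: dle_mul (dle_X_B _ _) tw].
- exists (B a c * w1 * (B d e * w2)); first by apply: paths_cat; apply: paths_edge.
  rewrite -(pgen_central_qgen tensorT k (balanced_central bal1)) mulrA -Uac -Vde.
  by apply: dle_mul tw2; apply: dle_mul; [apply: dle_mul (dle_U_B _ _) tw1 | apply: dle_V_B].
Qed.

(* [closing b c ks t]: t is the weight of a path from c to b that, between
   balanced segments, closes the pending letters p_k, k in ks, by letters q_k of V. *)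
Fixpoint closing b c ks : T -> Prop :=
  if ks is k :: ks' then fun t => exists d e t1 t2,
      [/\ balanced c d t1, V d e = q k, closing b e ks' t2 & t = t1 * t2]
  else balanced c b.

Lemma closing_cat b c d ks t1 t2 :
  balanced c d t1 -> closing b d ks t2 -> closing b c ks (t1 * t2).
Proof.
case: ks => [|k ks] /=; first exact: balanced_cat.
move=> bal1 [d' [e [s1 [s2 [bal Vde cl ->]]]]].
by exists d', e, (t1 * s1), s2; rewrite mulrA; split=> //; apply: balanced_cat bal1 bal.
Qed.

Lemma closing_X b a c ks t : closing b c ks t -> closing b a ks (iK (X a c) * t).
Proof.
case: ks => [|k ks] /=; first exact: balanced_X.
move=> [d [e [s1 [s2 [bal Vde cl ->]]]]].
by exists d, e, (iK (X a c) * s1), s2; rewrite mulrA; split=> //; apply: balanced_X.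
Qed.

Lemma closing_U b c d k ks t : U c d = p k -> closing b d (k :: ks) t -> closing b c ks t.
Proof.
move=> Ucd [e [f [t1 [t2 [bal Vef cl ->]]]]].
by apply: closing_cat cl; rewrite -[t1]mulr1; apply: balanced_pq Ucd Vef bal (balanced_nil _).
Qed.

Lemma closing_V b c d k ks t : V c d = q k -> closing b d ks t -> closing b c (k :: ks) t.
Proof. by move=> Vcd cl; exists c, d, 1, t; rewrite mul1r; split=> //; apply: balanced_nil. Qed.

Fixpoint pstack ks : T := if ks is k :: ks' then pstack ks' * p k else 1.

Lemma pstack_central_comm x ks : central x -> x * pstack ks = pstack ks * x.
Proof.
move=> cx; elim: ks => [|k ks IHks] /=; first by rewrite mul1r mulr1.
by rewrite mulrA IHks -!mulrA [x * p k]cx.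
Qed.

Lemma pgen_qgen_neq k l : k != l -> p k * q l = 0.
Proof. by rewrite (pgen_qgen tensorT) => /negbTE ->. Qed.

(* [reducible b c w]: reading ks as a stack of letters p_k pushed before w,
   p_0 ks w q_0 is a finite sum of weights closing ks. *)
Definition reducible b c w :=
  forall ks, i0 \notin ks -> finsum (closing b c ks) (p i0 * pstack ks * w * q i0).

Lemma reducible1 b : reducible b b 1.
Proof.
case=> [_ | k ks].
  by rewrite !mulr1 (pgen_qgen tensorT) eqxx; apply/finsum1/balanced_nil.
rewrite inE negb_or => /andP[i0k _].
by rewrite mulr1 /= -!mulrA pgen_qgen_neq 1?eq_sym // !mulr0; apply: finsum0.
Qed.

Lemma reducibleD b c w1 w2 :
  reducible b c w1 -> reducible b c w2 -> reducible b c (w1 + w2).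
Proof.
by move=> r1 r2 ks ks_i0; rewrite mulrDr mulrDl; apply: finsumD; [apply: r1 | apply: r2].
Qed.

Lemma reducible_U b c d w : reducible b d w -> reducible b c (U c d * w).
Proof.
move=> rw ks ks_i0; case: (U_gen c d) => [-> | [k ki0 Ucd]].
  by rewrite mul0r mulr0 mul0r; apply: finsum0.
rewrite Ucd !mulrA -(mulrA _ (pstack ks)).
apply: finsum_sub (rw (k :: ks) _) => [t | ]; first exact: closing_U.
by rewrite inE negb_or eq_sym ki0.
Qed.

Lemma reducible_X b c d w : reducible b d w -> reducible b c (iK (X c d) * w).
Proof.
move=> rw ks ks_i0; have cX := iK_central tensorT (X c d).
have -> : p i0 * pstack ks * (iK (X c d) * w) * q i0 =
          iK (X c d) * (p i0 * pstack ks * w * q i0).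
  by rewrite !mulrA -(mulrA _ _ (iK _)) -pstack_central_comm // mulrA -[p i0 * _]cX.
by apply: finsum_mull (rw _ ks_i0) => t; apply: closing_X.
Qed.

Lemma reducible_V b c d w : reducible b d w -> reducible b c (V c d * w).
Proof.
move=> rw [|k ks] ks_i0; case: (V_gen c d) => [-> | [l li0 Vcd]];
  try by rewrite mul0r mulr0 mul0r; apply: finsum0.
  by rewrite Vcd mulr1 mulrA pgen_qgen_neq 1?eq_sym // !mul0r; apply: finsum0.
rewrite [pstack _]/= Vcd !mulrA -(mulrA _ (p k)) (pgen_qgen tensorT).
case: (eqVneq k l) => [kl | _]; last by rewrite mulr0 !mul0r; apply: finsum0.
subst l; move: ks_i0; rewrite inE negb_or => /andP[_ ks_i0].
by rewrite mulr1; apply: finsum_sub (rw ks ks_i0) => t; apply: closing_V.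
Qed.

Lemma reducible_path b c s : reducible b c (path_weight B c s b).
Proof.
have edge c' d w : reducible b d w -> reducible b c' (B c' d * w).
  move=> rw; rewrite !mxE !mulrDl.
  apply: reducibleD; last exact: reducible_V.
  by apply: reducibleD; [apply: reducible_U | apply: reducible_X].
elim: s c => [|d s IHs] c /=; last exact: edge.
by rewrite -[B c b]mulr1; apply/edge/reducible1.
Qed.

Lemma paths_sandwich_balanced a b w :
  paths B a b w -> finsum (balanced a b) (p i0 * w * q i0).
Proof.
case=> [[-> ->] | [s ->]].
  by rewrite mulr1 (pgen_qgen tensorT) eqxx; apply/finsum1/balanced_nil.
by have := @reducible_path b a s [::] isT; rewrite mulr1.
Qed.

Definition Nsol : 'M[T]_n := (p i0)%:M * mxstar B * (q i0)%:M.

Lemma Nsol_entry a b : Nsol a b = p i0 * mxstar B a b * q i0.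
Proof. by rewrite mulmx_scalarE scalar_mulmxE. Qed.

Lemma dle_sandwich_Nsol x a b y z :
  (forall t, balanced a b t -> dle (x * t * y) z) -> dle (x * Nsol a b * y) z.
Proof.
move=> xty; rewrite Nsol_entry !mulrA -(mulrA _ (q i0)).
apply: (dle_sandwich_lub (regular_paths B a b) (mxstar_is_lub B a b)).
move=> w /paths_sandwich_balanced.
have -> : x * p i0 * w * (q i0 * y) = x * (p i0 * w * q i0) * y by rewrite !mulrA.
by move=> fs; apply: dle_finsum fs xty.
Qed.

Lemma Nsol_central a b : central (Nsol a b).
Proof.
rewrite Nsol_entry.
apply: centralizerC_lub (is_lub_sandwich _ _ (regular_paths B a b) (mxstar_is_lub B a b)) _.
  by apply: reg_mul (regular_set1 _); apply/regular_mul1l/regular_paths.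
move=> _ [_ [_ [[_ [w [-> [/paths_sandwich_balanced bal ->]]]] [-> ->]]]].
by apply: centralizerC_finsum bal => t; apply: balanced_central.
Qed.

Lemma balanced_le_Nsol a b t : balanced a b t -> dle t (Nsol a b).
Proof.
move=> bal; have [w pw tw] := balanced_le_path bal.
rewrite Nsol_entry -(pgen_central_qgen tensorT i0 (balanced_central bal)).
by apply/dle_mul2r/dle_mul2l; apply: dle_trans tw (is_lub_ub (mxstar_is_lub B a b) pw).
Qed.

Lemma Nsol_ge1 : dle 1 Nsol.
Proof.
have -> : 1 = (p i0)%:M * 1 * (q i0)%:M :> 'M[T]_n.
  by rewrite mulr1 -[_ * _]scalar_mxM (pgen_qgen tensorT) eqxx.
by apply/dle_mul2r/dle_mul2l/mxstar_ge1.
Qed.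

Lemma dle_XNsol : dle (map_mx iK X * Nsol) Nsol.
Proof.
rewrite /Nsol !mulrA.
have -> : map_mx iK X * (p i0)%:M = (p i0)%:M * map_mx iK X.
  by apply: mulmx_scalarC => a b; rewrite mxE [_ * p i0](iK_central tensorT).
rewrite -(mulrA _ (map_mx iK X)); apply/dle_mul2r/dle_mul2l.
apply: dle_trans (mxstar_unfoldl B); apply: dle_mul2r.
by apply/dle_mxP => a b; rewrite [map_mx iK X a b]mxE; apply: dle_X_B.
Qed.

Lemma dle_UNsolVNsol : dle (U * Nsol * V * Nsol) Nsol.
Proof.
apply/dle_mxP => a b; apply: dle_mulmx4 => c d e.
rewrite -mulrA; apply: dle_sandwich_Nsol => t1 bal1.
rewrite mulrA -[_ * Nsol e b]mulr1; apply: dle_sandwich_Nsol => t2 bal2; rewrite mulr1.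
case: (U_gen a c) => [-> | [k _ Uac]]; first by rewrite !mul0r; apply: dle0x.
case: (V_gen d e) => [-> | [l _ Vde]]; first by rewrite mulr0 mul0r; apply: dle0x.
rewrite Uac Vde.
have -> : p k * t1 * q l = t1 * (p k * q l) by rewrite /pgen -(balanced_central bal1) mulrA.
rewrite (pgen_qgen tensorT).
case: (eqVneq k l) => [kl | _]; last by rewrite mulr0 mul0r; apply: dle0x.
by subst l; rewrite mulr1; apply/balanced_le_Nsol/(balanced_pq Uac Vde bal1 bal2).
Qed.

Lemma Nsol_solution : dle (mxstar (U * Nsol * V + map_mx iK X)) Nsol.
Proof.
rewrite -[mxstar _]mulr1; apply: mxstar_indl; apply: dle_join; first exact: Nsol_ge1.
by rewrite mulrDl; apply: dle_join; [apply: dle_UNsolVNsol | apply: dle_XNsol].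
Qed.

Lemma balanced_le_mxstar Y a b t :
  mxle (mxstar (U * Y * V + map_mx iK X)) Y -> balanced a b t ->
  dle t (mxstar (U * Y * V + map_mx iK X) a b).
Proof.
set C := _ + _ => CY.
have C_star a' c b' x : dle x (mxstar C c b') -> dle (C a' c * x) (mxstar C a' b').
  move=> xC; apply: dle_trans ((dle_mxP _ _).1 (mxstar_unfoldl C) a' b').
  by apply: dle_trans (dle_mulmx_term _ _ _ c _); apply: dle_mul2l.
elim=> {a b t} [a | a c b t _ tC | a c d e b k t1 t2 Uac Vde bal1 t1C _ t2C].
- by have := (dle_mxP _ _).1 (mxstar_ge1 C) a a; rewrite mxE eqxx.
- apply: dle_trans (C_star _ _ _ _ tC); apply: dle_mul2r.
  by rewrite mxE [map_mx iK X a c]mxE; apply: dle_addr addrr_idem _ _.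
- apply: dle_trans (C_star _ _ _ _ t2C); apply: dle_mul2r.
  rewrite -(pgen_central_qgen tensorT k (balanced_central bal1)) mxE -Uac -Vde.
  apply: dle_trans (dle_addl addrr_idem _ _).
  apply: dle_trans (dle_mulmx3_term _ _ _ _ c d _).
  by apply/dle_mul2r/dle_mul2l; apply: dle_trans t1C (CY c d).
Qed.

Lemma Nsol_least Y : mxle (mxstar (U * Y * V + map_mx iK X)) Y -> mxle Nsol Y.
Proof.
move=> CY a b; rewrite -[Nsol a b]mul1r -[_ * Nsol a b]mulr1.
apply: dle_sandwich_Nsol => t bal; rewrite mul1r mulr1.
by apply: dle_trans (CY a b); apply: balanced_le_mxstar.
Qed.

Lemma sandwich_mxstar_W (W : 'M[T]_n) : (forall a b, central (W a b)) ->
  (p i0)%:M * mxstar (B + W * (q i0 * p i0)%:M) * (q i0)%:M = Nsol * mxstar (W * Nsol).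
Proof.
move=> cW; have Wq : W * (q i0)%:M = (q i0)%:M * W.
  by apply: mulmx_scalarC => a b; apply: cW.
have -> : (q i0 * p i0)%:M = (q i0)%:M * (p i0)%:M :> 'M[T]_n := scalar_mxM _ _ _.
by rewrite mulrA Wq mxstar_denest -!mulrA mxstar_slide /Nsol !mulrA.
Qed.

End LeastSolution.

Theorem theorem9 (K : rDioidType) (m : nat) (hm : (2 <= m)%N)
    (T : rDioidType) (iK : K -> T) (jC : rlang (Delta m) -> T)
    (hT : is_tensor iK jC)
    (i0 : 'I_m) (hi0 : nat_of_ord i0 = 0%N)
    (n : nat) (S : 'rV[T]_n) (F : 'cV[T]_n) (X : 'M[K]_n) (W U V : 'M[T]_n)
    (phi : T) :
  (forall a b, S a b = 0 \/ S a b = 1) ->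
  (forall a b, F a b = 0 \/ F a b = 1) ->
  (forall a b, W a b = 0 \/ W a b = 1) ->
  (forall a b, U a b = 0 \/ exists2 k : 'I_m, nat_of_ord k <> 0%N & U a b = pgen jC k) ->
  (forall a b, V a b = 0 \/ exists2 k : 'I_m, nat_of_ord k <> 0%N & V a b = qgen jC k) ->
  phi = (S *m mxstar (U + map_mx iK X + V + W *m (qgen jC i0 * pgen jC i0)%:M) *m F)
          ord0 ord0 ->
  exists N : 'M[T]_n,
    [/\ mxle (mxstar (U *m N *m V + map_mx iK X)) N,
        (forall Y : 'M[T]_n, mxle (mxstar (U *m Y *m V + map_mx iK X)) Y -> mxle N Y),
        pgen jC i0 * phi * qgen jC i0 = (S *m N *m mxstar (W *m N) *m F) ord0 ord0 &
        centralizerC jC ((S *m N *m mxstar (W *m N) *m F) ord0 ord0)].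
Proof.
(* The argument works for every m; [2 <= m] only excludes the degenerate case U = V = 0. *)
move=> S01 F01 W01 U_gen V_gen ->.
have gen_i0 (G : 'M[T]_n) g :
    (forall a b, G a b = 0 \/ exists2 k, nat_of_ord k <> 0%N & G a b = g k) ->
    forall a b, G a b = 0 \/ exists2 k, k != i0 & G a b = g k.
  move=> G_gen a b; case: (G_gen a b) => [|[k k0 Gab]]; [left | right; exists k] => //.
  by apply/eqP => ki0; apply: k0; rewrite ki0.
have {}U_gen := gen_i0 _ _ U_gen; have {}V_gen := gen_i0 _ _ V_gen.
have cS a b := centralizerC01 jC (S01 a b); have cF a b := centralizerC01 jC (F01 a b).
have cW a b := centralizerC01 jC (W01 a b).
have cN := Nsol_central hT X U_gen V_gen.
exists (Nsol iK jC i0 X U V); split.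
- by apply/dle_mxP; apply: Nsol_solution.
- exact: Nsol_least.
- have Sp a b : S a b * pgen jC i0 = pgen jC i0 * S a b := cS a b _.
  have Fq a b : F a b * qgen jC i0 = qgen jC i0 * F a b := cF a b _.
  by rewrite mulmx_scalar_sandwich // sandwich_mxstar_W // mulmxA.
- apply: centralizerC_mulmx _ cF _ _; apply: centralizerC_mulmx (centralizerC_mulmx cS cN) _.
  exact/centralizerC_mxstar/centralizerC_mulmx.
Qed.
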